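(* Let $\Omega\subset\mathbb{R}^3$ be open with coordinates $u$ and let $\{r_1,r_2,r_3\}$ be a smooth frame on $\Omega$. Define the $3\times3$ matrices $$A_\lambda=\begin{bmatrix} c^1_{23} & \Gamma^1_{32} & -\Gamma^1_{23}\\ \Gamma^2_{31} & c^2_{13} & -\Gamma^2_{13}\\ \Gamma^3_{21} & -\Gamma^3_{12} & c^3_{12}\end{bmatrix},\qquad A_\beta=\begin{bmatrix} c^1_{23} & -\Gamma^2_{31} & \Gamma^3_{21}\\ -\Gamma^1_{32} & c^2_{13} & \Gamma^3_{12}\\ -\Gamma^1_{23} & \Gamma^2_{13} & c^3_{12}\end{bmatrix}.$$ Then the linear systems $A_\lambda(\lambda^1,\lambda^2,\lambda^3)^T=0$ (the algebraic part of the $\lambda$-system) and $A_\beta(\beta^1,\beta^2,\beta^3)^T=0$ (the algebraic part of the $\beta$-system) have equal rank, and this rank is at most $2$; i.e. $\operatorname{rank}A_\lambda=\operatorname{rank}A_\beta\le 2$.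
   Context: In coordinates $u$, write $r_i=\sum_k R_i^k(u)\,\partial/\partial u^k$, let $R=[R_1|R_2|R_3]$ have columns $R_i=(R_i^1,R_i^2,R_i^3)^T$, let $L=R^{-1}$ with rows $L^1,L^2,L^3$, and set $\Gamma^k_{ij}:=L^k\,(DR_j)\,R_i$ ($DR_j$ the $u$-Jacobian of $R_j$) and $c^k_{ij}:=\Gamma^k_{ij}-\Gamma^k_{ji}$. The algebraic part of the $\lambda$-system consists of the relations $(\lambda^i-\lambda^k)\Gamma^k_{ji}=(\lambda^j-\lambda^k)\Gamma^k_{ij}$ for $i<j$, $k\notin\{i,j\}$, which for $n=3$ is the system with matrix $A_\lambda$; the algebraic part of the $\beta$-system consists of the relations $\beta^k c^k_{ij}+\beta^j\Gamma^j_{ik}-\beta^i\Gamma^i_{jk}=0$ for $i<j$, $k\notin\{i,j\}$, which for $n=3$ is the system with matrix $A_\beta$. *)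

From HB Require Import structures.
From mathcomp Require Import all_boot all_order all_algebra.
From mathcomp Require Import all_classical all_reals all_analysis.
Set Implicit Arguments. Unset Strict Implicit. Unset Printing Implicit Defensive.
Import Order.TTheory GRing.Theory Num.Theory.
Import numFieldNormedType.Exports.
Local Open Scope classical_set_scope.
Local Open Scope ring_scope.

Fixpoint Ck {R : realType} (k : nat) (O : set 'rV[R]_3)
    (f : 'rV[R]_3 -> 'rV[R]_3) : Prop :=
  match k with
  | 0 => {within O, continuous f}
  | k'.+1 => (forall x, O x -> differentiable f x) /\
             (forall v : 'rV[R]_3, Ck k' O (fun x => 'D_v f x))
  end.

Definition smooth_on {R : realType} (O : set 'rV[R]_3)
  (f : 'rV[R]_3 -> 'rV[R]_3) : Prop := forall k, Ck k O f.

(* The matrix R(u) = [R_1 | R_2 | R_3] whose i-th column holds the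
   components R_i^a(u) of the vector field r_i. *)
Definition frameM {R : realType} (r : 'I_3 -> 'rV[R]_3 -> 'rV[R]_3)
  (u : 'rV[R]_3) : 'M[R]_3 := \matrix_(a < 3, i < 3) r i u 0 a.

Definition smooth_frame {R : realType} (O : set 'rV[R]_3)
  (r : 'I_3 -> 'rV[R]_3 -> 'rV[R]_3) : Prop :=
  (forall i, smooth_on O (r i)) /\ (forall u, O u -> frameM r u \in unitmx).

(* Gamma^k_{ij}(u) = L^k (DR_j) R_i, with L = R^{-1}; indices 1-based. *)
Definition Gam {R : realType} (r : 'I_3 -> 'rV[R]_3 -> 'rV[R]_3)
  (u : 'rV[R]_3) (k i j : nat) : R :=
  (row (inord k.-1) (invmx (frameM r u))
     *m ('d (r (inord j.-1)) u (r (inord i.-1) u))^T) 0 0.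

Definition cc {R : realType} (r : 'I_3 -> 'rV[R]_3 -> 'rV[R]_3)
  (u : 'rV[R]_3) (k i j : nat) : R := Gam r u k i j - Gam r u k j i.

Definition mx3 {R : realType} (a11 a12 a13 a21 a22 a23 a31 a32 a33 : R)
  : 'M[R]_3 :=
  \matrix_(i < 3, j < 3)
    nth 0 (nth [::] [:: [:: a11; a12; a13]; [:: a21; a22; a23];
                       [:: a31; a32; a33]] i) j.

Definition A_lambda {R : realType} (r : 'I_3 -> 'rV[R]_3 -> 'rV[R]_3)
  (u : 'rV[R]_3) : 'M[R]_3 :=
  mx3 (cc r u 1 2 3)   (Gam r u 1 3 2)  (- Gam r u 1 2 3)
      (Gam r u 2 3 1)  (cc r u 2 1 3)   (- Gam r u 2 1 3)
      (Gam r u 3 2 1)  (- Gam r u 3 1 2) (cc r u 3 1 2).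

Definition A_beta {R : realType} (r : 'I_3 -> 'rV[R]_3 -> 'rV[R]_3)
  (u : 'rV[R]_3) : 'M[R]_3 :=
  mx3 (cc r u 1 2 3)    (- Gam r u 2 3 1) (Gam r u 3 2 1)
      (- Gam r u 1 3 2) (cc r u 2 1 3)    (Gam r u 3 1 2)
      (- Gam r u 1 2 3) (Gam r u 2 1 3)   (cc r u 3 1 2).

From HB Require Import structures.
From mathcomp Require Import all_boot all_order all_algebra.
From mathcomp Require Import all_classical all_reals all_analysis.
From mathcomp Require Import ring.
Import Order.TTheory GRing.Theory Num.Theory.
Import numFieldNormedType.Exports.
Local Open Scope classical_set_scope.
Local Open Scope ring_scope.

(* The statement is pointwise linear algebra: conjugating the transpose of
   A_lambda by the sign matrix diag(1, -1, 1) gives A_beta, so the two ranks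
   agree; and every row of A_lambda sums to zero (each c^k_ij cancels against
   the two Gamma entries beside it), so (1, 1, 1)^T lies in its kernel and the
   rank is at most 2. *)

Section RankFacts.
Variable F : fieldType.

Lemma mxrank_unit_conj_tr n (P Q A : 'M[F]_n) :
  P \in unitmx -> Q \in unitmx -> \rank (P *m A^T *m Q) = \rank A.
Proof.
move=> Pu Qu; rewrite mxrankMfree ?row_free_unit //.
by rewrite eqmxMfull ?row_full_unit // mxrank_tr.
Qed.

Lemma mxrank_lt_kernel n (A : 'M[F]_n) (v : 'cV[F]_n) :
  v != 0 -> A *m v = 0 -> (\rank A < n)%N.
Proof.
rewrite -mxrank_eq0 -lt0n => rk_v_gt0 /mulmx0_rank_max rk_sum.
by rewrite -addn1 (leq_trans _ rk_sum) // leq_add2l.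
Qed.

Lemma diag_mx_unit n (d : 'rV[F]_n) :
  (forall i, d 0 i != 0) -> diag_mx d \in unitmx.
Proof. by move=> d_neq0; rewrite unitmxE det_diag unitfE; apply/prodf_neq0. Qed.

End RankFacts.

Section FrameMatrices.
Variable R : realType.
Implicit Types (r : 'I_3 -> 'rV[R]_3 -> 'rV[R]_3) (u : 'rV[R]_3).

Definition sign_mx : 'M[R]_3 :=
  diag_mx (\row_(j < 3) (-1) ^+ (j == 1 :> nat)).

Lemma sign_mx_unit : sign_mx \in unitmx.
Proof.
by apply: diag_mx_unit => j; rewrite mxE signr_eq0.
Qed.

Lemma A_beta_sign_conj r u :
  A_beta r u = sign_mx *m (A_lambda r u)^T *m sign_mx.
Proof.
apply/matrixP=> i j; rewrite mul_mx_diag mul_diag_mx !mxE.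
by case: i => [[|[|[|i]]] Hi] //=; case: j => [[|[|[|j]]] Hj] //=;
  rewrite /cc; ring.
Qed.

Lemma A_lambda_row_sums r u : A_lambda r u *m (const_mx 1 : 'cV[R]_3) = 0.
Proof.
apply/matrixP=> i j; rewrite !mxE !big_ord_recr big_ord0 /= !mxE /cc.
by case: i => [[|[|[|i]]] Hi] //=; ring.
Qed.

End FrameMatrices.

Theorem proposition4p2 (R : realType) (O : set 'rV[R]_3)
  (r : 'I_3 -> 'rV[R]_3 -> 'rV[R]_3) :
  open O -> smooth_frame O r ->
  forall u, O u ->
    \rank (A_lambda r u) = \rank (A_beta r u) /\ (\rank (A_lambda r u) <= 2)%N.
Proof.
move=> _ _ u _; split.
  by rewrite A_beta_sign_conj mxrank_unit_conj_tr // sign_mx_unit.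
apply: (@mxrank_lt_kernel _ 3 _ (const_mx 1)); last exact: A_lambda_row_sums.
by apply/negP => /eqP/matrixP/(_ 0 0); rewrite !mxE => /eqP; rewrite oner_eq0.
Qed.
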